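(* Let $N_t,N_r,M$ be positive integers with $M>r:=N_t+N_r$, let ${\bf F}\in\mathbb{C}^{N_r\times M}$, ${\bf G}\in\mathbb{C}^{N_t\times M}$, ${\bf H}_d\in\mathbb{C}^{N_r\times N_t}$, and let $\boldsymbol{\Theta}\in\mathbb{C}^{M\times M}$ be unitary and symmetric ($\boldsymbol{\Theta}\boldsymbol{\Theta}^H={\bf I}_M$, $\boldsymbol{\Theta}=\boldsymbol{\Theta}^T$). Let ${\bf Z}=[{\bf F}^H\,|\,{\bf G}^T]\in\mathbb{C}^{M\times r}$ and let ${\bf U}_Z\in\mathbb{C}^{M\times k}$ have orthonormal columns forming a basis of the column space of ${\bf Z}$ ($k=\operatorname{rank}{\bf Z}\le r$). Define $\tilde{\boldsymbol{\Theta}}={\bf U}_Z^H\boldsymbol{\Theta}{\bf U}_Z^*$ and $\boldsymbol{\Theta}_{lr}={\bf U}_Z\tilde{\boldsymbol{\Theta}}{\bf U}_Z^T$. Then $\boldsymbol{\Theta}_{lr}$ is a symmetric matrix of rank at most $r$, $\tilde{\boldsymbol{\Theta}}$ is a symmetric matrix with $\tilde{\boldsymbol{\Theta}}\tilde{\boldsymbol{\Theta}}^H\preceq{\bf I}_k$, and (i) ${\bf F}\boldsymbol{\Theta}{\bf G}^H={\bf F}\boldsymbol{\Theta}_{lr}{\bf G}^H$, hence ${\bf H}_d+{\bf F}\boldsymbol{\Theta}{\bf G}^H={\bf H}_d+{\bf F}\boldsymbol{\Theta}_{lr}{\bf G}^H$; (ii) $\boldsymbol{\Theta}_{lr}\boldsymbol{\Theta}_{lr}^H\preceq{\bf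 I}_M$.
   Context: ${\bf A}^*$ is the entrywise conjugate, ${\bf A}^H$ the conjugate transpose; ${\bf X}\preceq{\bf Y}$ means ${\bf Y}-{\bf X}$ is positive semidefinite. $[{\bf A}\,|\,{\bf B}]$ denotes horizontal concatenation. *)

(* Complex scalars: an arbitrary numClosedFieldType C
   (e.g. complex R[i] for R : realType), with conjugation Num.conj. *)
From HB Require Import structures.
From mathcomp Require Import all_boot all_order all_algebra.
Set Implicit Arguments. Unset Strict Implicit. Unset Printing Implicit Defensive.
Import Order.TTheory GRing.Theory Num.Theory.
Local Open Scope ring_scope.

Definition entconj (C : numClosedFieldType) m n (A : 'M[C]_(m, n)) : 'M[C]_(m, n) :=
  map_mx Num.conj A.

Definition adjmx (C : numClosedFieldType) m n (A : 'M[C]_(m, n)) : 'M[C]_(n, m) :=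
  (entconj A)^T.

Definition psdmx (C : numClosedFieldType) n (A : 'M[C]_n) : Prop :=
  adjmx A = A /\ forall v : 'cV[C]_n, 0 <= (adjmx v *m A *m v) 0 0.

Definition lemx (C : numClosedFieldType) n (X Y : 'M[C]_n) : Prop := psdmx (Y - X).

Arguments entconj {C m n} A.
Arguments adjmx {C m n} A.
Arguments psdmx {C n} A.
Arguments lemx {C n} X Y.

From HB Require Import structures.
From mathcomp Require Import all_boot all_order all_algebra.
Import Order.TTheory GRing.Theory Num.Theory.
Local Open Scope ring_scope.

Set Implicit Arguments.
Unset Strict Implicit.
Unset Printing Implicit Defensive.

(* With W := conj U, both U and W are isometries (U^H U = W^H W = 1), so
   Theta~ = U^H Theta W is a compression of the unitary Theta, hence a
   contraction, and it is symmetric because Theta is.  Theta_lr = U Theta~ U^T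
   is again a symmetric contraction, of rank at most rank U = rank Z.  Since
   U U^H is the orthogonal projector onto the column space of Z, F U U^H = F
   and W U^T G^H = G^H, whence F Theta_lr G^H = F Theta G^H. *)

Lemma trmx_congr_sym (R : comNzRingType) m n (B : 'M[R]_(m, n)) (S : 'M_m) :
  S^T = S -> (B^T *m S *m B)^T = B^T *m S *m B.
Proof. by move=> symS; rewrite !trmx_mul trmxK symS mulmxA. Qed.

Section Adjoint.
Context {C : numClosedFieldType}.

Lemma entconjM m n p (A : 'M[C]_(m, n)) (B : 'M_(n, p)) :
  entconj (A *m B) = entconj A *m entconj B.
Proof. exact: map_mxM. Qed.

Lemma entconjK m n (A : 'M[C]_(m, n)) : entconj (entconj A) = A.
Proof. by apply/matrixP=> i j; rewrite !mxE conjCK. Qed.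

Lemma entconj1 n : entconj (1%:M : 'M[C]_n) = 1%:M.
Proof. exact: map_mx1. Qed.

Lemma adjmxM m n p (A : 'M[C]_(m, n)) (B : 'M_(n, p)) :
  adjmx (A *m B) = adjmx B *m adjmx A.
Proof. by rewrite /adjmx entconjM trmx_mul. Qed.

Lemma adjmx_tr m n (A : 'M[C]_(m, n)) : adjmx A^T = entconj A.
Proof. by rewrite /adjmx /entconj map_trmx trmxK. Qed.

Lemma entconj_tr m n (A : 'M[C]_(m, n)) : entconj A^T = adjmx A.
Proof. by rewrite /adjmx /entconj map_trmx. Qed.

Lemma entconj_adjmx m n (A : 'M[C]_(m, n)) : entconj (adjmx A) = A^T.
Proof. by rewrite -entconj_tr entconjK. Qed.

Lemma adjmx_entconj m n (A : 'M[C]_(m, n)) : adjmx (entconj A) = A^T.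
Proof. by rewrite /adjmx entconjK. Qed.

Lemma adjmxK m n (A : 'M[C]_(m, n)) : adjmx (adjmx A) = A.
Proof. by apply/matrixP=> i j; rewrite !mxE conjCK. Qed.

Lemma adjmx1 n : adjmx (1%:M : 'M[C]_n) = 1%:M.
Proof. by rewrite /adjmx entconj1 trmx1. Qed.

Lemma adjmxD m n (A B : 'M[C]_(m, n)) : adjmx (A + B) = adjmx A + adjmx B.
Proof. by rewrite /adjmx /entconj map_mxD linearD. Qed.

Lemma adjmxB m n (A B : 'M[C]_(m, n)) : adjmx (A - B) = adjmx A - adjmx B.
Proof. by rewrite /adjmx /entconj map_mxB linearB. Qed.

Lemma entconj_isometry m n (U : 'M[C]_(m, n)) :
  adjmx U *m U = 1%:M -> adjmx (entconj U) *m entconj U = 1%:M.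
Proof.
move=> isoU.
by rewrite adjmx_entconj -[LHS]entconjK entconjM entconj_tr entconjK isoU entconj1.
Qed.

Lemma psdmx_gram m n (A : 'M[C]_(m, n)) : psdmx (adjmx A *m A).
Proof.
split; first by rewrite adjmxM adjmxK.
move=> v; rewrite !mulmxA -adjmxM -mulmxA mxE.
apply: sumr_ge0 => i _; rewrite /adjmx !mxE mulrC; exact: mul_conjC_ge0.
Qed.

Lemma psdmxD n (A B : 'M[C]_n) : psdmx A -> psdmx B -> psdmx (A + B).
Proof.
move=> [hermA posA] [hermB posB]; split; first by rewrite adjmxD hermA hermB.
by move=> v; rewrite mulmxDr mulmxDl mxE addr_ge0.
Qed.

Lemma psdmx_congr m n (A : 'M[C]_n) (B : 'M_(n, m)) :
  psdmx A -> psdmx (adjmx B *m A *m B).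
Proof.
move=> [hermA posA]; split; first by rewrite !adjmxM adjmxK hermA mulmxA.
by move=> v; have := posA (B *m v); rewrite adjmxM !mulmxA.
Qed.

Lemma psdmx_subr_isometry m n (W : 'M[C]_(m, n)) :
  adjmx W *m W = 1%:M -> psdmx (1%:M - W *m adjmx W).
Proof.
move=> isoW; set P := W *m adjmx W.
have idemP : P *m P = P by rewrite /P mulmxA -(mulmxA W) isoW mulmx1.
have hermP : adjmx P = P by rewrite /P adjmxM adjmxK.
suff <- : adjmx (1%:M - P) *m (1%:M - P) = 1%:M - P by exact: psdmx_gram.
by rewrite adjmxB adjmx1 hermP mulmxBl mul1mx mulmxBr mulmx1 idemP subrr subr0.
Qed.

Lemma lemx_compression a b m p (V : 'M[C]_(a, m)) (T : 'M_(a, b))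
    (W : 'M_(b, p)) :
  adjmx V *m V = 1%:M -> T *m adjmx T = 1%:M -> adjmx W *m W = 1%:M ->
  lemx (adjmx V *m T *m W *m adjmx (adjmx V *m T *m W)) 1%:M.
Proof.
move=> isoV coisoT isoW; rewrite /lemx.
have -> : 1%:M - adjmx V *m T *m W *m adjmx (adjmx V *m T *m W) =
          adjmx (adjmx T *m V) *m (1%:M - W *m adjmx W) *m (adjmx T *m V).
  rewrite !adjmxM !adjmxK mulmxBr mulmx1 mulmxBl !mulmxA.
  by rewrite -(mulmxA _ T (adjmx T)) coisoT mulmx1 isoV.
exact/psdmx_congr/psdmx_subr_isometry.
Qed.

Lemma lemx_isometry_congr m n (U : 'M[C]_(m, n)) (X : 'M_n) :
  adjmx U *m U = 1%:M -> lemx X 1%:M -> lemx (U *m X *m adjmx U) 1%:M.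
Proof.
move=> isoU leX1; rewrite /lemx.
have -> : 1%:M - U *m X *m adjmx U =
          (1%:M - U *m adjmx U) + adjmx (adjmx U) *m (1%:M - X) *m adjmx U.
  by rewrite adjmxK mulmxBr mulmx1 mulmxBl addrA subrK.
exact/psdmxD/psdmx_congr/leX1/psdmx_subr_isometry.
Qed.

Lemma isometry_proj_id m n p (U : 'M[C]_(m, n)) (Z : 'M_(m, p)) :
  adjmx U *m U = 1%:M -> (Z^T <= U^T)%MS -> U *m adjmx U *m Z = Z.
Proof.
move=> isoU /submxP[D defZ].
have -> : Z = U *m D^T by rewrite -[Z]trmxK defZ trmx_mul trmxK.
by rewrite -!mulmxA (mulmxA (adjmx U)) isoU mul1mx.
Qed.

End Adjoint.

Theorem theorem2 (C : numClosedFieldType) (Nt Nr M k : nat)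
  (F : 'M[C]_(Nr, M)) (G : 'M[C]_(Nt, M)) (Hd : 'M[C]_(Nr, Nt))
  (Theta : 'M[C]_M) (U : 'M[C]_(M, k)) :
  (0 < Nt)%N -> (0 < Nr)%N -> (0 < M)%N -> (Nt + Nr < M)%N ->
  Theta *m adjmx Theta = 1%:M ->
  Theta = Theta^T ->
  (* U has orthonormal columns ... *)
  adjmx U *m U = 1%:M ->
  (* ... spanning the column space of Z = [F^H | G^T] *)
  (U^T == (row_mx (adjmx F) G^T)^T)%MS ->
  let Thetat := adjmx U *m Theta *m entconj U in
  let Thetalr := U *m Thetat *m U^T in
  [/\ Thetalr^T = Thetalr,
      (\rank Thetalr <= Nt + Nr)%N,
      Thetat^T = Thetat &
      lemx (Thetat *m adjmx Thetat) 1%:M] /\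
  [/\ F *m Theta *m adjmx G = F *m Thetalr *m adjmx G,
      Hd + F *m Theta *m adjmx G = Hd + F *m Thetalr *m adjmx G
    & lemx (Thetalr *m adjmx Thetalr) 1%:M].
Proof.
move=> _ _ _ _ unitTheta symTheta isoU /andP[spanU spanZ] Thetat Thetalr.
have isoUc := entconj_isometry isoU.
have symThetat : Thetat^T = Thetat by exact: trmx_congr_sym.
have leThetat : lemx (Thetat *m adjmx Thetat) 1%:M.
  exact: lemx_compression isoU unitTheta isoUc.
have := isometry_proj_id isoU spanZ; rewrite mul_mx_row => /eq_row_mx[projF projG].
have {}projF : F *m U *m adjmx U = F.
  by have := congr1 adjmx projF; rewrite !adjmxM !adjmxK mulmxA.
have {}projG : entconj U *m U^T *m adjmx G = adjmx G.
  by have := congr1 entconj projG; rewrite !entconjM entconj_adjmx entconj_tr.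
have eqFG : F *m Theta *m adjmx G = F *m Thetalr *m adjmx G.
  by rewrite /Thetalr /Thetat !mulmxA projF -!mulmxA (mulmxA _ U^T) projG.
split; split => //.
- by rewrite /Thetalr -{1}[U]trmxK trmx_congr_sym // trmxK.
- rewrite (leq_trans (mxrankM_maxl _ _)) // (leq_trans (mxrankM_maxl _ _)) //.
  rewrite -mxrank_tr (leq_trans (mxrankS spanU)) //.
  by rewrite [(Nt + Nr)%N]addnC rank_leq_row.
- by rewrite eqFG.
have -> : Thetalr *m adjmx Thetalr = U *m (Thetat *m adjmx Thetat) *m adjmx U.
  rewrite /Thetalr !adjmxM adjmx_tr !mulmxA -(mulmxA _ U^T).
  by rewrite -adjmx_entconj isoUc mulmx1.
exact: lemx_isometry_congr.
Qed.
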